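(* Let $p\geq 3$ be a prime and $s$ a positive integer. Then for every integer $n>p^{s}$ we have $$\nu_{p}\big(A_{p,(p-1)(p^s-1)}(n)\big)=1.$$
   Context: For an integer $m\geq 2$ and a positive integer $k$, the integers $A_{m,k}(n)$, $n\in\mathbb{N}=\{0,1,2,\ldots\}$, are defined by the formal power series identity $\prod_{i=0}^{\infty}\big(1-x^{m^{i}}\big)^{-k}=\sum_{n=0}^{\infty}A_{m,k}(n)x^{n}$. For a prime $p$, $\nu_p(n)$ denotes the $p$-adic valuation of the integer $n$, with $\nu_p(0)=+\infty$. *)

From mathcomp Require Import all_boot all_order all_algebra.
Set Implicit Arguments. Unset Strict Implicit. Unset Printing Implicit Defensive.
Import GRing.Theory.
Local Open Scope ring_scope.

(* Truncated geometric series 1 + x^d + x^(2d) + ... + x^(N d), i.e. the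
   power series (1 - x^d)^{-1} modulo terms of degree > N*d. *)
Definition geom_trunc (N d : nat) : {poly int} :=
  \sum_(j < N.+1) 'X^(j * d).

(* A_{m,k}(n) = [x^n] prod_{i>=0} (1 - x^{m^i})^{-k}.
   Only factors with i <= n matter (m^i > n for i > n since m >= 2), and in
   each factor only the terms of degree <= n matter, so the coefficient of
   x^n is that of the finite product below. *)
Definition A (m k n : nat) : int :=
  (\prod_(i < n.+1) (geom_trunc n (m ^ i)%N) ^+ k)`_n.

(* p-adic valuation of an integer (nu_p(0) = +oo is never equal to 1;
   here logn p 0 = 0, which is also <> 1). *)
Definition nu (p : nat) (z : int) : nat := logn p `|z|%N.

(* Put k = (p - 1) m with m = p^s - 1, so that the generating series of
   A_{p,k} is G^(-k) for G = prod_i (1 - x^(p^i)).  Since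
   (1 - x)^p = 1 - x^p + p T(x) with T in Z[x], modulo p^2 we get
   G^(p-1) = (1 - x)^(-1) (1 + p S) with S = sum_i T(x^(p^i)) / (1 - x^(p^(i+1))),
   and as p divides m + 1 this yields G^(-k) = (1 - x)^m (1 + p S) mod p^2.
   For n > m the n-th coefficient is thus p times that of (1 - x)^m S, and
   (1 - x)^m = (1 - x^(p^s)) / (1 - x) mod p.  In that coefficient the terms
   of S with i < s cancel because T(1) = 0, and the remaining ones leave the
   coefficient (-1)^j C(p, j) / p of T, where j is the lowest nonzero base-p
   digit of n / p^s; it is prime to p. *)

From mathcomp Require Import all_boot all_order all_algebra.
From mathcomp Require Import ring.
Set Implicit Arguments. Unset Strict Implicit. Unset Printing Implicit Defensive.
Import GRing.Theory.
Local Open Scope ring_scope.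

(* Congruence modulo the ideal (c, X^M) of R[X]: modulo X^M, polynomials
   represent power series truncated at degree M. *)
Definition eqCX (R : comNzRingType) (c : R) (M : nat) (f g : {poly R}) :=
  exists a b : {poly R}, f - g = c%:P * a + 'X^M * b.

Notation "f = g %[mod c , 'X^ M ]" := (eqCX c M f g)
  (at level 70, g at next level) : ring_scope.

Section CongruenceModCX.

Variables (R : comNzRingType) (c : R) (M : nat).
Implicit Types f g h u v : {poly R}.

Lemma eqCX_refl f : f = f %[mod c, 'X^M].
Proof. by exists 0, 0; rewrite subrr !mulr0 addr0. Qed.

Lemma eqCX_sym f g : f = g %[mod c, 'X^M] -> g = f %[mod c, 'X^M].
Proof. by case=> a [b e]; exists (- a), (- b); rewrite -opprB e !mulrN opprD. Qed.

Lemma eqCX_trans f g h :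
  f = g %[mod c, 'X^M] -> g = h %[mod c, 'X^M] -> f = h %[mod c, 'X^M].
Proof.
case=> a [b e] [a' [b' e']]; exists (a + a'), (b + b').
by rewrite -(subrKA g) e e' !mulrDr addrACA.
Qed.

Lemma eqCX_Cmul f g a : f - g = c%:P * a -> f = g %[mod c, 'X^M].
Proof. by move=> e; exists a, 0; rewrite mulr0 addr0. Qed.

Lemma eqCX_Xmul f g b : f - g = 'X^M * b -> f = g %[mod c, 'X^M].
Proof. by move=> e; exists 0, b; rewrite mulr0 add0r. Qed.

Lemma eqCX_add f g f' g' :
  f = g %[mod c, 'X^M] -> f' = g' %[mod c, 'X^M] -> f + f' = g + g' %[mod c, 'X^M].
Proof.
case=> a [b e] [a' [b' e']]; exists (a + a'), (b + b').
by rewrite opprD addrACA e e' !mulrDr addrACA.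
Qed.

Lemma eqCX_mull h f g : f = g %[mod c, 'X^M] -> h * f = h * g %[mod c, 'X^M].
Proof.
case=> a [b e]; exists (h * a), (h * b).
by rewrite -mulrBr e mulrDr !mulrA ![h * _]mulrC.
Qed.

Lemma eqCX_mul f g f' g' :
  f = g %[mod c, 'X^M] -> f' = g' %[mod c, 'X^M] -> f * f' = g * g' %[mod c, 'X^M].
Proof.
move=> Efg Efg'; apply: (@eqCX_trans _ (g * f')); last exact: eqCX_mull.
by rewrite ![_ * f']mulrC; apply: eqCX_mull.
Qed.

Lemma eqCX_exp f g k : f = g %[mod c, 'X^M] -> f ^+ k = g ^+ k %[mod c, 'X^M].
Proof.
move=> Efg; elim: k => [|k IHk]; first exact: eqCX_refl.
by rewrite !exprS; apply: eqCX_mul.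
Qed.

Lemma eqCX_prod {I : Type} {r : seq I} {P : pred I} (F G : I -> {poly R}) :
    (forall i, P i -> F i = G i %[mod c, 'X^M]) ->
  \prod_(i <- r | P i) F i = \prod_(i <- r | P i) G i %[mod c, 'X^M].
Proof.
move=> EFG; elim/big_rec2: _ => [|i x y Pi Exy]; first exact: eqCX_refl.
by apply: eqCX_mul => //; apply: EFG.
Qed.

Lemma eqCX_1subXn k : (M <= k)%N -> 1 - 'X^k = 1 %[mod c, 'X^M].
Proof.
move=> leMk; apply: (@eqCX_Xmul _ _ (- 'X^(k - M))).
by rewrite addrAC subrr add0r mulrN -exprD subnKC.
Qed.

Lemma eqCX_coef f g i :
  f = g %[mod c, 'X^M] -> (i < M)%N -> exists z, f`_i = g`_i + c * z.
Proof.
case=> a [b e] ltiM; exists a`_i.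
by rewrite -[f`_i](subrK g`_i) -coefB e coefD coefCM coefXnM ltiM addr0 addrC.
Qed.

Lemma eqCX_cancel u v f g : u * v = 1 %[mod c, 'X^M] ->
  f * u = g * u %[mod c, 'X^M] -> f = g %[mod c, 'X^M].
Proof.
move=> Euv Efg.
have Ef : f * u * v = f %[mod c, 'X^M].
  by rewrite -mulrA -[X in _ = X %[mod _, 'X^_]]mulr1; apply: eqCX_mull.
apply: eqCX_trans (eqCX_sym Ef) _; apply: eqCX_trans (_ : g * u * v = g %[mod c, 'X^M]).
  by rewrite ![_ * v]mulrC; apply: eqCX_mull.
by rewrite -mulrA -[X in _ = X %[mod _, 'X^_]]mulr1; apply: eqCX_mull.
Qed.

End CongruenceModCX.

Arguments eqCX_refl {R c M f}.

Section CongruenceModC2.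

Variables (R : comNzRingType) (c : R) (M : nat).

Lemma eqCX_prod_1addC (I : Type) (r : seq I) (a : I -> {poly R}) :
  \prod_(i <- r) (1 + c%:P * a i) = 1 + c%:P * \sum_(i <- r) a i %[mod c ^+ 2, 'X^M].
Proof.
elim: r => [|i r IHr]; first by rewrite !big_nil mulr0 addr0; apply: eqCX_refl.
rewrite !big_cons; apply: eqCX_trans (eqCX_mull _ IHr) _.
apply: (@eqCX_Cmul _ _ _ _ _ (a i * \sum_(j <- r) a j)); rewrite polyC_exp; ring.
Qed.

Lemma eqCX_exp_1addC a m :
  (1 + c%:P * a) ^+ m = 1 + c%:P * (a *+ m) %[mod c ^+ 2, 'X^M].
Proof. by rewrite -(card_ord m) -prodr_const -sumr_const; apply: eqCX_prod_1addC. Qed.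

End CongruenceModC2.

Section GeometricSums.

Variable R : comNzRingType.

Definition geom (a d : nat) : {poly R} := \sum_(j < a) 'X^(j * d).

Lemma geomS a d : geom a.+1 d = 1 + 'X^d * geom a d.
Proof.
rewrite /geom big_ord_recl mul0n expr0 mulr_sumr; congr (_ + _).
by apply: eq_bigr => j _; rewrite -exprD.
Qed.

Lemma geom_mul_1subXn a d : geom a d * (1 - 'X^d) = 1 - 'X^(a * d).
Proof.
elim: a => [|a IHa]; first by rewrite /geom big_ord0 mul0r mul0n expr0 subrr.
by rewrite geomS mulrDl mul1r -mulrA IHa mulrBr mulr1 -exprD addrA subrK mulSn.
Qed.

Lemma geom1_mul_1subX a : geom a 1 * (1 - 'X) = 1 - 'X^a.
Proof. by have := geom_mul_1subXn a 1; rewrite expr1 muln1. Qed.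

Lemma geom_split a d : geom (a * d) 1 = geom d 1 * geom a d.
Proof.
apply: (monic_rreg (monicXsubC 1)); rewrite /= -opprB !mulrN geom1_mul_1subX.
by rewrite mulrAC geom1_mul_1subX [(1 - _) * _]mulrC geom_mul_1subXn mulnC.
Qed.

Lemma eqCX_geom_inv c N d : (0 < d)%N -> geom N d * (1 - 'X^d) = 1 %[mod c, 'X^N].
Proof. by move=> d_gt0; rewrite geom_mul_1subXn; apply: eqCX_1subXn; rewrite leq_pmulr. Qed.

Lemma eqCX_geom_telescope c N (e : nat -> nat) K : (forall i, 0 < e i)%N ->
  \prod_(i < K) (geom N (e i) * (1 - 'X^(e i.+1)))
    = geom N (e 0%N) * (1 - 'X^(e K)) %[mod c, 'X^N].
Proof.
move=> e_gt0; elim: K => [|K IHK].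
  by rewrite big_ord0; apply/eqCX_sym/eqCX_geom_inv.
rewrite big_ord_recr /=; apply: eqCX_trans (eqCX_mul IHK eqCX_refl) _.
rewrite mulrA -(mulrA _ _ (geom N (e K))) [_ * geom N _]mulrC.
apply: (eqCX_mul _ eqCX_refl); rewrite -[X in _ = X %[mod _, 'X^_]]mulr1.
exact/eqCX_mull/eqCX_geom_inv.
Qed.

Lemma geom_comp a d e : geom a d \Po 'X^e = geom a (d * e).
Proof.
rewrite /geom raddf_sum; apply: eq_bigr => j _.
by rewrite /= comp_Xn_poly -exprM; congr (_ ^+ _); rewrite mulnC mulnA.
Qed.

Lemma size_geom a d : (size (geom a d) <= (a.-1 * d).+1)%N.
Proof.
rewrite /geom; elim/big_ind: _ => [|f g sf sg|j _].
- by rewrite size_poly0.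
- by apply: leq_trans (size_polyD f g) _; rewrite geq_max sf.
- rewrite size_polyXn ltnS leq_mul2r.
  by rewrite -ltnS (leq_trans (ltn_ord j) (leqSpred a)) orbT.
Qed.

Lemma coef_geom1 a i : (geom a 1)`_i = (i < a)%:R.
Proof.
rewrite /geom coef_sum; case: ltnP => [ltia | leai].
  rewrite (bigD1 (Ordinal ltia)) //= muln1 coefXn eqxx big1 ?addr0 // => j neji.
  rewrite muln1 coefXn; case: eqP => // eij.
  by case/eqP: neji; apply: val_inj; rewrite /= eij.
rewrite big1 // => j _; rewrite muln1 coefXn; case: eqP => // eij.
by move: (ltn_ord j); rewrite -eij ltnNge leai.
Qed.

Lemma coef_mul_comp_Xn (A B : {poly R}) d r : (0 < d)%N -> (size A <= d)%N ->
  (A * (B \Po 'X^d))`_r = A`_(r %% d) * B`_(r %/ d).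
Proof.
move=> d_gt0 szA; have lt_rmod : (r %% d < r.+1)%N by rewrite ltnS leq_mod.
rewrite coefM (bigD1 (Ordinal lt_rmod)) //= big1 ?addr0.
  have -> : (r - r %% d = r %/ d * d)%N by rewrite {1}(divn_eq r d) addnK.
  by rewrite coef_comp_poly_Xn // dvdn_mull // mulnK.
move=> i neq_i; rewrite coef_comp_poly_Xn //; case: ifPn => [dvd_i|]; last by rewrite mulr0.
suff le_di : (d <= i)%N by rewrite nth_default ?mul0r // (leq_trans szA le_di).
rewrite leqNgt; apply: contra neq_i => ltid; apply/eqP/val_inj => /=.
by rewrite -[r in RHS](subnK (ltnSE (ltn_ord i))) -modnDml (eqP dvd_i) add0n modn_small.
Qed.

Lemma coef_geom1_mul_root1 M n (W : {poly R}) :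
  root W 1 -> (size W <= n.+1)%N -> (n < M)%N -> (geom M 1 * W)`_n = 0.
Proof.
move=> /factor_theorem [Z ->] szW ltnM.
have -> : geom M 1 * (Z * ('X - 1%:P)) = Z * 'X^M - Z.
  by rewrite mulrCA -opprB mulrN (geom_mul_1subXn M 1) muln1; ring.
rewrite coefB coefMXn ltnM sub0r nth_default ?oppr0 //.
have [->|nzZ] := eqVneq Z 0; first by rewrite size_poly0.
by move: szW; rewrite size_Mmonic ?monicXsubC // size_XsubC addn2.
Qed.

End GeometricSums.

Arguments geom {R}.

Lemma coef_1subX_exp (R : comNzRingType) n i :
  ((1 - 'X : {poly R}) ^+ n)`_i = (-1) ^+ i * 'C(n, i)%:R.
Proof.
elim: n i => [|n IHn] [|i]; first by rewrite expr0 coef1 mulr1.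
- by rewrite expr0 coef1 mulr0.
- by rewrite exprS mulrBl mul1r coefB coefXM subr0 IHn !bin0.
by rewrite exprS mulrBl mul1r coefB coefXM /= !IHn binS natrD exprS; ring.
Qed.

Lemma comp_poly_exp (R : comNzRingType) (q r : {poly R}) k :
  (q ^+ k) \Po r = (q \Po r) ^+ k.
Proof. exact: rmorphXn. Qed.

Lemma prime_ndvd_fact_pred p : prime p -> ~~ (p %| (p.-1)`!)%N.
Proof.
move=> p_pr; have := p_pr; rewrite Wilson ?prime_gt1 // -addn1.
apply: contraL => /dvdn_addr->; rewrite dvdn1; apply/eqP => p1.
by rewrite p1 in p_pr.
Qed.

Lemma geom_truncE n d : geom_trunc n d = geom n.+1 d.
Proof. by []. Qed.

Section OddPrime.

Variable p : nat.
Hypotheses (p_pr : prime p) (p_odd : odd p).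

Let p_gt0 : (0 < p)%N := prime_gt0 p_pr.
Let p_gt1 : (1 < p)%N := prime_gt1 p_pr.

Definition frob_coef (j : nat) : int := (-1) ^+ j * ('C(p, j) %/ p)%N%:Z.

Definition frob_poly : {poly int} := \poly_(j < p) frob_coef j.

Lemma frob_coef0 : frob_coef 0 = 0.
Proof. by rewrite /frob_coef bin0 divn_small ?prime_gt1 ?mulr0. Qed.

Lemma frob_coef_ndvd j : (0 < j < p)%N -> ~~ (p %| `|frob_coef j|)%N.
Proof.
move=> j_range; rewrite /frob_coef abszMsign /=.
have /dvdnP [q Eq] := prime_dvd_bin p_pr j_range; rewrite Eq mulnK //.
have fact_p : p`! = (p * p.-1`!)%N by rewrite -{1}(prednK p_gt0) factS prednK.
have Efact : (q * (j`! * (p - j)`!) = p.-1`!)%N.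
  apply/eqP; rewrite -(eqn_pmul2l p_gt0) -fact_p -(bin_fact (ltnW (proj2 (andP j_range)))).
  by rewrite Eq mulnA [(p * q)%N]mulnC.
apply: contra (prime_ndvd_fact_pred p_pr); rewrite -Efact; exact: dvdn_mulr.
Qed.

Lemma exp_1subX_prime : (1 - 'X) ^+ p = 1 - 'X^p + (p%:Z)%:P * frob_poly.
Proof.
apply/polyP => i; rewrite coef_1subX_exp coefD coefB coef1 coefXn coefCM coef_poly.
have [->|i_gt0] := posnP i.
  by rewrite bin0 p_gt0 frob_coef0 eq_sym (gtn_eqF p_gt0) mulr0 subr0 addr0 mulr1.
rewrite mulr0n sub0r; case: ltngtP => [ltip|ltpi|->].
- rewrite add0r /frob_coef mulrCA -PoszM mulnC divnK ?prime_dvd_bin ?i_gt0 //.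
  by rewrite natz.
- by rewrite bin_small // mulr0n oppr0 !mulr0 addr0.
- by rewrite binn mulr1 -signr_odd p_odd mulr0 addr0 mulr1n.
Qed.

Lemma exp_1subXn_prime d :
  (1 - 'X^d) ^+ p = 1 - 'X^(d * p) + (p%:Z)%:P * (frob_poly \Po 'X^d).
Proof.
have := congr1 (comp_poly 'X^d) exp_1subX_prime; rewrite /= comp_poly_exp.
rewrite comp_polyB comp_polyD comp_polyB comp_polyM comp_polyX comp_Xn_poly.
by rewrite -polyC1 !comp_polyC -exprM polyC1 => ->.
Qed.

Lemma root_frob_poly : root frob_poly 1.
Proof.
have := congr1 (horner^~ 1) exp_1subX_prime; rewrite /= !hornerE subrr expr0n.
rewrite (gtn_eqF p_gt0) expr1n subrr add0r => /esym/eqP.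
by rewrite mulf_eq0 => /orP [/eqP [p0]|//]; move: p_gt0; rewrite p0.
Qed.

(* frob_corr N is frob_poly / (1 - X^p) modulo X^(N p); hence frob_sum N N
   is the series S of the proof idea modulo X^N. *)
Definition frob_corr (N : nat) : {poly int} := frob_poly * geom N p.

Definition frob_sum (N K : nat) : {poly int} :=
  \sum_(i < K) (frob_corr N \Po 'X^(p ^ i)%N).

Lemma frob_corr_comp N e :
  frob_corr N \Po 'X^e = (frob_poly \Po 'X^e) * geom N (e * p).
Proof. by rewrite comp_polyM geom_comp mulnC. Qed.

Lemma eqCX_exp_pred_1subXn c N e : (0 < e)%N ->
  (1 - 'X^e) ^+ p.-1 = geom N e * (1 - 'X^(e * p))
    * (1 + (p%:Z)%:P * (frob_corr N \Po 'X^e)) %[mod c, 'X^N].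
Proof.
move=> e_gt0; have ep_gt0 : (0 < e * p)%N by rewrite muln_gt0 e_gt0.
apply: (@eqCX_trans _ _ _ _ (geom N e * (1 - 'X^e) ^+ p)).
  rewrite -(prednK p_gt0) exprS mulrA prednK // -[X in X = _ %[mod _, 'X^_]]mul1r.
  exact/eqCX_mul/eqCX_refl/eqCX_sym/eqCX_geom_inv.
rewrite exp_1subXn_prime // frob_corr_comp.
set g := geom N e; set u := 1 - 'X^(e * p); set t := frob_poly \Po 'X^e.
have -> : g * u * (1 + (p%:Z)%:P * (t * geom N (e * p)))
    = g * u + g * ((p%:Z)%:P * t) * (geom N (e * p) * u) by ring.
rewrite mulrDr; apply: eqCX_add eqCX_refl _.
by rewrite -[X in X = _ %[mod _, 'X^_]]mulr1; apply/eqCX_mull/eqCX_sym/eqCX_geom_inv.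
Qed.

Lemma eqCX_prod_pred_1subXn N :
  \prod_(i < N) (1 - 'X^(p ^ i)) ^+ p.-1
    = geom N 1 * (1 + (p%:Z)%:P * frob_sum N N) %[mod (p%:Z) ^+ 2, 'X^N].
Proof.
have pi_gt0 i : (0 < p ^ i)%N by rewrite expn_gt0 p_gt0.
have step i := eqCX_exp_pred_1subXn ((p%:Z) ^+ 2) N (pi_gt0 i).
apply: eqCX_trans (eqCX_prod (fun (i : 'I_N) _ => step i)) _.
rewrite big_split /=; apply: eqCX_mul; last exact: eqCX_prod_1addC.
under eq_bigr => i _ do rewrite -expnSr.
apply: eqCX_trans (eqCX_geom_telescope _ _ _ pi_gt0) _.
rewrite -[X in _ = X %[mod _, 'X^_]]mulr1; apply/eqCX_mull/eqCX_1subXn.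
exact/ltnW/ltn_expl/prime_gt1.
Qed.

Lemma eqCX_A_series n m : (p %| m.+1)%N ->
  \prod_(i < n.+1) geom_trunc n (p ^ i) ^+ ((p - 1) * m)
    = (1 - 'X) ^+ m * (1 + (p%:Z)%:P * frob_sum n.+1 n.+1)
      %[mod (p%:Z) ^+ 2, 'X^n.+1].
Proof.
move=> p_dvd_m1; set N := n.+1; set S := frob_sum N N; set k := ((p - 1) * m)%N.
set F := \prod_(i < N) _; set H := _ * _.
pose E := \prod_(i < N) (1 - 'X^(p ^ i) : {poly int}) ^+ k.
have FE : F * E = 1 %[mod (p%:Z) ^+ 2, 'X^N].
  rewrite -big_split /=; apply: (@eqCX_trans _ _ _ _ (\prod_(i < N) 1)).
    apply: eqCX_prod => i _; rewrite geom_truncE -exprMn.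
    rewrite -[X in _ = X %[mod _, 'X^_]](expr1n _ k).
    by apply/eqCX_exp/eqCX_geom_inv; rewrite expn_gt0 p_gt0.
  by rewrite big1_eq; apply: eqCX_refl.
have HE : H * E = 1 %[mod (p%:Z) ^+ 2, 'X^N].
  have -> : E = (\prod_(i < N) (1 - 'X^(p ^ i)) ^+ p.-1) ^+ m.
    by rewrite -prodrXl; apply: eq_bigr => i _; rewrite /k -exprM subn1.
  apply: eqCX_trans (eqCX_mull H (eqCX_exp m (eqCX_prod_pred_1subXn N))) _.
  have -> : H * (geom N 1 * (1 + (p%:Z)%:P * S)) ^+ m
      = (geom N 1 * (1 - 'X)) ^+ m * (1 + (p%:Z)%:P * S) ^+ m.+1.
    by rewrite /H exprSr !exprMn; ring.
  rewrite -[X in _ = X %[mod _, 'X^_]]mulr1; apply: eqCX_mul.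
    rewrite -[X in _ = X %[mod _, 'X^_]](expr1n _ m) geom1_mul_1subX.
    exact/eqCX_exp/eqCX_1subXn.
  apply: eqCX_trans (eqCX_exp_1addC _ _ _ _) _.
  apply: (@eqCX_Cmul _ _ _ _ _ (S *+ (m.+1 %/ p))).
  by rewrite -{1}(divnK p_dvd_m1) mulrnA -mulr_natr -polyC_natr natz polyC_exp; ring.
apply: (@eqCX_cancel _ _ _ E F); first by rewrite mulrC.
exact: eqCX_trans FE (eqCX_sym HE).
Qed.


Lemma coef_frob_corr N r : (r < N * p)%N -> (frob_corr N)`_r = frob_coef (r %% p).
Proof.
move=> lt_r_Np; rewrite /frob_corr -[p in geom N p]mul1n -geom_comp.
rewrite coef_mul_comp_Xn ?size_poly // coef_poly ltn_pmod // coef_geom1.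
by rewrite ltn_divLR // lt_r_Np mulr1.
Qed.

Lemma frob_sumD N a b :
  frob_sum N (a + b) = frob_sum N a + (frob_sum N b \Po 'X^(p ^ a)).
Proof.
rewrite /frob_sum big_split_ord raddf_sum /=; congr (_ + _); apply: eq_bigr => i _.
by rewrite -comp_polyA comp_Xn_poly -exprM -expnD addnC.
Qed.

Lemma frob_sumS N K : frob_sum N K.+1 = frob_corr N + (frob_sum N K \Po 'X^p).
Proof.
by rewrite -add1n frob_sumD /frob_sum big_ord1 expn0 expr1 comp_polyXr expn1.
Qed.

(* j is the lowest nonzero digit of q in base p. *)
Lemma coef_frob_sum N K q : (0 < q < p ^ K)%N -> (q < N)%N ->
  exists2 j, (0 < j < p)%N & (frob_sum N K)`_q = frob_coef j.
Proof.
elim: K q => [|K IHK] q /andP [q_gt0 lt_q_pK] lt_qN.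
  by move: lt_q_pK; rewrite expn0 ltnNge q_gt0.
rewrite frob_sumS coefD coef_comp_poly_Xn // coef_frob_corr; last first.
  by rewrite (leq_trans lt_qN) // leq_pmulr.
have [p_dvd_q | p_ndvd_q] := boolP (p %| q)%N; last first.
  exists (q %% p)%N; last by rewrite addr0.
  by rewrite ltn_pmod // andbT lt0n -/(dvdn p q).
rewrite (eqP p_dvd_q) frob_coef0 // add0r; apply: IHK.
  by rewrite divn_gt0 // dvdn_leq //= ltn_divLR // -expnSr.
exact: leq_ltn_trans (leq_div q p) lt_qN.
Qed.

Lemma coef_geom_frob_corr_low N s i n : (i < s)%N -> (p ^ s <= n < N)%N ->
  (geom (p ^ s) 1 * (frob_corr N \Po 'X^(p ^ i)))`_n = 0.
Proof.
move=> lt_is /andP [le_ps_n lt_nN]; set b := (p ^ (s - i.+1))%N.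
have Eb : (b * p ^ i.+1 = p ^ s)%N by rewrite -expnD subnK.
set W := (frob_poly \Po 'X^(p ^ i)) * geom b (p ^ i.+1).
have -> : geom (p ^ s) 1 * (frob_corr N \Po 'X^(p ^ i)) = geom (N * p ^ i.+1) 1 * W.
  by rewrite -Eb !geom_split frob_corr_comp -expnSr /W; ring.
apply: coef_geom1_mul_root1.
- rewrite /root /W hornerM horner_comp hornerXn expr1n.
  by rewrite (eqP root_frob_poly) mul0r.
- have szT : (size (frob_poly \Po 'X^(p ^ i)) <= p ^ i.+1)%N.
    apply: leq_trans (size_comp_poly_leq _ _) _.
    rewrite size_polyXn /= expnS ltn_mul2r expn_gt0 p_gt0 /=.
    have := leq_sub2r 1 (size_poly p frob_coef); rewrite !subn1 => /leq_ltn_trans.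
    by apply; rewrite ltn_predL.
  have szG := @size_geom int b (p ^ i.+1).
  have Eb' : (b.-1 * p ^ i.+1 + p ^ i.+1 = p ^ s)%N.
    by rewrite -Eb -mulSnr prednK // expn_gt0 p_gt0.
  apply: leq_trans (size_polyMleq _ _) _; rewrite -subn1 leq_subLR.
  apply: leq_trans (leq_add szT szG) _.
  by rewrite addnS addnC Eb' add1n ltnS leqW.
- by rewrite (leq_trans lt_nN) // leq_pmulr // expn_gt0 p_gt0.
Qed.

Lemma coef_geom_frob_sum N s n : (s <= N)%N -> (p ^ s <= n < N)%N ->
  (geom (p ^ s) 1 * frob_sum N N)`_n = (frob_sum N (N - s))`_(n %/ p ^ s).
Proof.
move=> le_sN n_range; have ps_gt0 : (0 < p ^ s)%N by rewrite expn_gt0 p_gt0.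
have -> : frob_sum N N = frob_sum N (s + (N - s)) by rewrite subnKC.
rewrite frob_sumD mulrDr coefD {1}/frob_sum mulr_sumr coef_sum big1 => [|i _]; last first.
  exact: coef_geom_frob_corr_low.
rewrite add0r coef_mul_comp_Xn // ?coef_geom1 ?ltn_pmod ?mul1r //.
by apply: leq_trans (size_geom _ _ _) _; rewrite muln1 prednK.
Qed.

Lemma eqCX_1subX_exp_expn M s :
  (1 - 'X) ^+ (p ^ s) = 1 - 'X^(p ^ s) %[mod p%:Z, 'X^M].
Proof.
elim: s => [|s IHs]; first by rewrite expn0 expr1; apply: eqCX_refl.
rewrite expnSr exprM; apply: eqCX_trans (eqCX_exp _ IHs) _.
apply: (@eqCX_Cmul _ _ _ _ _ (frob_poly \Po 'X^(p ^ s))).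
by rewrite exp_1subXn_prime // addrAC subrr add0r.
Qed.

Lemma eqCX_1subX_exp_geom M s :
  (1 - 'X) ^+ (p ^ s - 1) = geom (p ^ s) 1 %[mod p%:Z, 'X^M].
Proof.
apply: (@eqCX_cancel _ _ _ (1 - 'X) (geom M 1)).
  by rewrite mulrC geom1_mul_1subX; apply: eqCX_1subXn.
rewrite geom1_mul_1subX -exprSr subn1 prednK ?expn_gt0 ?p_gt0 //.
exact: eqCX_1subX_exp_expn.
Qed.

Lemma coef_A_mod_p2 s n : (0 < s)%N -> (p ^ s < n)%N ->
  exists z, A p ((p - 1) * (p ^ s - 1)) n
    = p%:Z * ((geom (p ^ s) 1 * frob_sum n.+1 n.+1)`_n + p%:Z * z).
Proof.
move=> s_gt0 lt_ps_n; set m := (p ^ s - 1)%N; set S := frob_sum n.+1 n.+1.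
have p_dvd_m1 : (p %| m.+1)%N by rewrite /m subn1 prednK ?expn_gt0 ?p_gt0 // dvdn_exp.
have [z1 E1] := eqCX_coef (eqCX_A_series n p_dvd_m1) (ltnSn n).
have [z2 E2] := eqCX_coef (eqCX_mul (eqCX_1subX_exp_geom n.+1 s) (@eqCX_refl _ _ _ S)) (ltnSn n).
have Hn : ((1 - 'X) ^+ m * (1 + (p%:Z)%:P * S))`_n = p%:Z * ((1 - 'X) ^+ m * S)`_n.
  rewrite mulrDr mulr1 coefD mulrCA coefCM coef_1subX_exp bin_small ?mulr0 ?add0r //.
  by rewrite /m (leq_ltn_trans (leq_subr _ _) lt_ps_n).
by exists (z2 + z1); rewrite /A E1 Hn E2; ring.
Qed.

Lemma A_eq_p_mul s n : (0 < s)%N -> (p ^ s < n)%N ->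
  exists2 w : int, A p ((p - 1) * (p ^ s - 1)) n = p%:Z * w & ~~ (p %| `|w|)%N.
Proof.
move=> s_gt0 lt_ps_n; have [z ->] := coef_A_mod_p2 s_gt0 lt_ps_n.
have ps_gt0 : (0 < p ^ s)%N by rewrite expn_gt0 p_gt0.
have le_sN : (s <= n.+1)%N.
  by rewrite ltnW // (ltn_trans (ltn_expl s p_gt1)) // (ltn_trans lt_ps_n).
rewrite coef_geom_frob_sum // ?(ltnW lt_ps_n) ?ltnSn //.
have [j j_range ->] : exists2 j, (0 < j < p)%N
    & (frob_sum n.+1 (n.+1 - s))`_(n %/ p ^ s) = frob_coef j.
  apply: coef_frob_sum; last exact: leq_ltn_trans (leq_div n _) (ltnSn n).
  rewrite divn_gt0 ?(ltnW lt_ps_n) //= ltn_divLR // -expnD subnK //.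
  exact: ltn_trans (ltnSn n) (ltn_expl n.+1 p_gt1).
exists (frob_coef j + p%:Z * z) => //; apply: contra (frob_coef_ndvd j_range).
change ((p%:Z %| frob_coef j + p%:Z * z)%Z -> (p%:Z %| frob_coef j)%Z).
by rewrite rpredDr // dvdz_mulr.
Qed.

End OddPrime.

Lemma nu_p_mul p (w : int) : prime p -> ~~ (p %| `|w|)%N -> nu p (p%:Z * w) = 1%N.
Proof.
move=> p_pr p_ndvd_w; have w_gt0 : (0 < `|w|)%N.
  by rewrite lt0n; apply: contraNneq p_ndvd_w => ->.
rewrite /nu abszM /= lognM ?(prime_gt0 p_pr) // logn_prime // eqxx.
by rewrite logn_coprime // prime_coprime.
Qed.

Local Close Scope ring_scope.

Theorem theorem3p1 (p s n : nat) (hp : prime p) (hp3 : (3 <= p)%N)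
  (hs : (0 < s)%N) (hn : (p ^ s < n)%N) :
  nu p (A p ((p - 1) * (p ^ s - 1)) n) = 1%N.
Proof.
have p_odd : odd p by case/even_prime: hp hp3 => ->.
have [w -> p_ndvd_w] := A_eq_p_mul hp p_odd hs hn.
exact: nu_p_mul.
Qed.
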